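(* Let $\mathbf{X}=(\mathbf{x}^1,\dots,\mathbf{x}^n)\in\mathbb{R}^{n\times T\times q}$ and $\mathbf{X}'=(\mathbf{x}'^1,\dots,\mathbf{x}'^{n'})\in\mathbb{R}^{n'\times T'\times q}$ be time series datasets with sample weights $\mathbf{w}\in\Delta_n$, $\mathbf{w}'\in\Delta_{n'}$, and let $\mathbf{Y}=(y_1,\dots,y_n)\in\mathcal{C}^n$ be class labels of the samples of $\mathbf{X}$, with $\mathcal{C}$ a finite set of classes. Let $\mathrm{cost}(\mathrm{OT}_{\mathrm{DTW}}(\mathbf{X},\mathbf{X}'))$, $\mathrm{cost}(|\mathcal{C}|\text{-MAD}(\mathbf{X},\mathbf{X}',\mathbf{Y}))$ and $\mathrm{cost}(\mathrm{MAD}(\mathbf{X},\mathbf{X}'))$ denote the optimal values of the three optimization problems defined in the context. Then $$\mathrm{cost}(\mathrm{OT}_{\mathrm{DTW}}(\mathbf{X},\mathbf{X}'))\le \mathrm{cost}(|\mathcal{C}|\text{-MAD}(\mathbf{X},\mathbf{X}',\mathbf{Y}))\le \mathrm{cost}(\mathrm{MAD}(\mathbf{X},\mathbf{X}')).$$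
   Context: Here $\Delta_n$ is the probability simplex in $\mathbb{R}^n$, and $\mathbf{x}^i_t\in\mathbb{R}^q$ is the $t$-th time step of the $i$-th series. The set of couplings is $\Gamma(\mathbf{w},\mathbf{w}')=\{\boldsymbol\gamma\in\mathbb{R}_{\ge0}^{n\times n'}:\boldsymbol\gamma\mathbf{1}_{n'}=\mathbf{w},\ \boldsymbol\gamma^\top\mathbf{1}_n=\mathbf{w}'\}$. $\mathcal{A}(T,T')$ is the set of admissible DTW alignments. These are binary matrices $\boldsymbol\pi\in\{0,1\}^{T\times T'}$ whose nonzero entries form a path from $(1,1)$ to $(T,T')$ using only steps $(1,0)$, $(0,1)$ or $(1,1)$. The ground cost tensor is $\mathbf{L}(\mathbf{X},\mathbf{X}')$, with entries $L^{i,j}_{t,t'}=\|\mathbf{x}^i_t-\mathbf{x}'^j_{t'}\|_2^2$. For $\boldsymbol\pi\in\mathbb{R}^{T\times T'}$, $\mathbf{L}\otimes\boldsymbol\pi$ is the $n\times n'$ matrix with entries $(\mathbf{L}\otimes\boldsymbol\pi)_{ij}=\sum_{t,t'}L^{i,j}_{t,t'}\pi_{tt'}$. Also $\mathrm{DTW}(\mathbf{x}^i,\mathbf{x}'^j)=\min_{\boldsymbol\pi\in\mathcal{A}(T,T')}\sum_{t,t'}L^{i,j}_{t,t'}\pi_{tt'}$. The three problems are: - $\mathrm{OT}_{\mathrm{DTW}}(\mathbf{X},\mathbf{X}')$ is $\min_{\boldsymbol\gamma\in\Gamma(\mathbf{w},\mathbf{w}')}\sum_{i,j}\gamma_{ij}\,\mathrm{DTW}(\mathbf{x}^i,\mathbf{x}'^j)$.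 - $\mathrm{MAD}(\mathbf{X},\mathbf{X}')$ is $\min_{\boldsymbol\gamma\in\Gamma(\mathbf{w},\mathbf{w}'),\ \boldsymbol\pi\in\mathcal{A}(T,T')}\langle\mathbf{L}(\mathbf{X},\mathbf{X}')\otimes\boldsymbol\pi,\boldsymbol\gamma\rangle$, where $\langle\cdot,\cdot\rangle$ is the Frobenius inner product. - $|\mathcal{C}|\text{-MAD}(\mathbf{X},\mathbf{X}',\mathbf{Y})$ is $\min\sum_{i,j}\gamma_{ij}\sum_{t,t'}L^{i,j}_{t,t'}\pi^{(y_i)}_{tt'}$. The minimum is over $\boldsymbol\gamma\in\Gamma(\mathbf{w},\mathbf{w}')$ and one alignment $\boldsymbol\pi^{(c)}\in\mathcal{A}(T,T')$ per class $c\in\mathcal{C}$. *)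

From HB Require Import structures.
From mathcomp Require Import all_boot all_order all_algebra.
From mathcomp Require Import boolp classical_sets reals.
Set Implicit Arguments. Unset Strict Implicit. Unset Printing Implicit Defensive.
Import Order.TTheory GRing.Theory Num.Theory.
Local Open Scope ring_scope.
Local Open Scope classical_set_scope.

Section Defs.
Variable R : realType.

Definition in_simplex (n : nat) (w : 'I_n -> R) : Prop :=
  (forall i, 0 <= w i) /\ \sum_(i < n) w i = 1.

Definition coupling (n n' : nat) (w : 'I_n -> R) (w' : 'I_n' -> R)
  (g : 'M[R]_(n, n')) : Prop :=
  (forall i j, 0 <= g i j) /\
  (forall i, \sum_(j < n') g i j = w i) /\
  (forall j, \sum_(i < n) g i j = w' j).

Definition dtw_step (a b : nat * nat) : bool :=
  [|| b == (a.1.+1, a.2), b == (a.1, a.2.+1) | b == (a.1.+1, a.2.+1)].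

(* pi in A(T,T'): a 0/1 matrix whose nonzero entries are exactly the cells of a
   path from (1,1) to (T,T') (0-based: (0,0) to (T-1,T'-1)) with admissible steps. *)
Definition alignment (T T' : nat) (pi : 'M[R]_(T, T')) : Prop :=
  exists s : seq (nat * nat),
    path dtw_step (0%N, 0%N) s /\ last (0%N, 0%N) s = (T.-1, T'.-1) /\
    forall (t : 'I_T) (t' : 'I_T'),
      pi t t' = if ((t : nat), (t' : nat)) \in (0%N, 0%N) :: s then 1 else 0.

Definition ground_cost (n n' T T' q : nat)
  (X : 'I_n -> 'I_T -> 'I_q -> R) (X' : 'I_n' -> 'I_T' -> 'I_q -> R)
  (i : 'I_n) (j : 'I_n') (t : 'I_T) (t' : 'I_T') : R :=
  \sum_(k < q) (X i t k - X' j t' k) ^+ 2.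

(* sum_{t,t'} L^{i,j}_{t,t'} pi_{t t'}  = (L (x) pi)_{ij} *)
Definition Lpi (n n' T T' q : nat)
  (X : 'I_n -> 'I_T -> 'I_q -> R) (X' : 'I_n' -> 'I_T' -> 'I_q -> R)
  (pi : 'M[R]_(T, T')) (i : 'I_n) (j : 'I_n') : R :=
  \sum_(t < T) \sum_(t' < T') ground_cost X X' i j t t' * pi t t'.

Definition DTW (n n' T T' q : nat)
  (X : 'I_n -> 'I_T -> 'I_q -> R) (X' : 'I_n' -> 'I_T' -> 'I_q -> R)
  (i : 'I_n) (j : 'I_n') : R :=
  inf [set c | exists pi : 'M[R]_(T, T'), alignment pi /\ c = Lpi X X' pi i j].

Definition cost_OT_DTW (n n' T T' q : nat)
  (X : 'I_n -> 'I_T -> 'I_q -> R) (X' : 'I_n' -> 'I_T' -> 'I_q -> R)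
  (w : 'I_n -> R) (w' : 'I_n' -> R) : R :=
  inf [set c | exists g : 'M[R]_(n, n'), coupling w w' g /\
         c = \sum_(i < n) \sum_(j < n') g i j * DTW X X' i j].

Definition cost_MAD (n n' T T' q : nat)
  (X : 'I_n -> 'I_T -> 'I_q -> R) (X' : 'I_n' -> 'I_T' -> 'I_q -> R)
  (w : 'I_n -> R) (w' : 'I_n' -> R) : R :=
  inf [set c | exists (g : 'M[R]_(n, n')) (pi : 'M[R]_(T, T')),
         coupling w w' g /\ alignment pi /\
         c = \sum_(i < n) \sum_(j < n') g i j * Lpi X X' pi i j].

Definition cost_CMAD (C : finType) (n n' T T' q : nat)
  (X : 'I_n -> 'I_T -> 'I_q -> R) (X' : 'I_n' -> 'I_T' -> 'I_q -> R)
  (Y : 'I_n -> C) (w : 'I_n -> R) (w' : 'I_n' -> R) : R :=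
  inf [set c | exists (g : 'M[R]_(n, n')) (pis : C -> 'M[R]_(T, T')),
         coupling w w' g /\ (forall cl, alignment (pis cl)) /\
         c = \sum_(i < n) \sum_(j < n') g i j * Lpi X X' (pis (Y i)) i j].

End Defs.

(* Every MAD alignment is a constant family of per-class alignments, and each
   per-class alignment used for the pair (i, j) costs at least DTW(x^i, x'^j).
   As coupling weights are nonnegative, the objective values compare pointwise,
   hence so do their infima; the feasible sets are nonempty (an alignment path
   always exists and w w'^T is a coupling) and bounded below by 0. *)
From mathcomp Require Import all_boot all_order all_algebra.
From mathcomp Require Import classical_sets reals.
Set Implicit Arguments. Unset Strict Implicit. Unset Printing Implicit Defensive.
Import Order.TTheory GRing.Theory Num.Theory.
Local Open Scope ring_scope.

Lemma inf_le_inf (R : realType) (A B : set R) :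
  has_lbound A -> nonempty B -> (forall b, B b -> exists2 a, A a & a <= b) ->
  inf A <= inf B.
Proof.
move=> lbA neB domAB; apply: lb_le_inf => // b /domAB [a Aa le_ab].
exact: le_trans (ge_inf lbA Aa) le_ab.
Qed.

Lemma dtw_path_exists (a b : nat) : exists s : seq (nat * nat),
  path dtw_step (0%N, 0%N) s /\ last (0%N, 0%N) s = (a, b).
Proof.
elim: b => [|b [s [s_path s_last]]].
  elim: a => [|a [s [s_path s_last]]]; first by exists [::].
  exists (rcons s (a.+1, 0%N)); rewrite rcons_path last_rcons s_path s_last.
  by rewrite /dtw_step /= eqxx.
exists (rcons s (a, b.+1)); rewrite rcons_path last_rcons s_path s_last.
by rewrite /dtw_step /= eqxx orbT.
Qed.

Section Alignments.
Variables (R : realType) (T T' : nat).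

Lemma alignment_exists : exists pi : 'M[R]_(T, T'), alignment pi.
Proof.
have [s [s_path s_last]] := dtw_path_exists T.-1 T'.-1.
exists (\matrix_(t, t') if ((t : nat), (t' : nat)) \in (0%N, 0%N) :: s then 1 else 0).
by exists s; do 2!split => //; move=> t t'; rewrite mxE.
Qed.

Lemma alignment_ge0 (pi : 'M[R]_(T, T')) t t' : alignment pi -> 0 <= pi t t'.
Proof. by move=> [s [_ [_ ->]]]; case: ifP. Qed.

End Alignments.

Lemma coupling_ge0 (R : realType) (n n' : nat) (w : 'I_n -> R) (w' : 'I_n' -> R)
  (g : 'M[R]_(n, n')) i j : coupling w w' g -> 0 <= g i j.
Proof. by case. Qed.

Lemma product_coupling (R : realType) (n n' : nat) (w : 'I_n -> R) (w' : 'I_n' -> R) :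
  in_simplex w -> in_simplex w' -> coupling w w' (\matrix_(i, j) (w i * w' j)).
Proof.
move=> [w_ge0 w_sum1] [w'_ge0 w'_sum1]; split; [|split].
- by move=> i j; rewrite mxE mulr_ge0.
- by move=> i; under eq_bigr do rewrite mxE; rewrite -mulr_sumr w'_sum1 mulr1.
- by move=> j; under eq_bigr do rewrite mxE; rewrite -mulr_suml w_sum1 mul1r.
Qed.

Section WeightedSums.
Variables (R : realType) (n n' : nat) (g : 'M[R]_(n, n')).
Hypothesis g_ge0 : forall i j, 0 <= g i j.

Lemma weighted_sum_ge0 (f : 'I_n -> 'I_n' -> R) :
  (forall i j, 0 <= f i j) -> 0 <= \sum_i \sum_j g i j * f i j.
Proof.
by move=> f_ge0; do 2!apply: sumr_ge0 => ? _; rewrite mulr_ge0.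
Qed.

Lemma ler_weighted_sum (f h : 'I_n -> 'I_n' -> R) :
  (forall i j, f i j <= h i j) ->
  \sum_i \sum_j g i j * f i j <= \sum_i \sum_j g i j * h i j.
Proof.
by move=> le_fh; do 2!apply: ler_sum => ? _; rewrite ler_wpM2l.
Qed.

End WeightedSums.

Section Costs.
Variables (R : realType) (n n' T T' q : nat).
Variables (X : 'I_n -> 'I_T -> 'I_q -> R) (X' : 'I_n' -> 'I_T' -> 'I_q -> R).

Lemma ground_cost_ge0 i j t t' : 0 <= ground_cost X X' i j t t'.
Proof. by apply: sumr_ge0 => k _; apply: sqr_ge0. Qed.

Lemma Lpi_ge0 (pi : 'M[R]_(T, T')) i j : alignment pi -> 0 <= Lpi X X' pi i j.
Proof.
move=> pi_align; do 2!apply: sumr_ge0 => ? _.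
by rewrite mulr_ge0 ?ground_cost_ge0 ?alignment_ge0.
Qed.

Lemma DTW_le_Lpi (pi : 'M[R]_(T, T')) i j :
  alignment pi -> DTW X X' i j <= Lpi X X' pi i j.
Proof.
move=> pi_align; apply: ge_inf; last by exists pi.
by exists 0 => _ [p [p_align ->]]; exact: Lpi_ge0.
Qed.

Lemma DTW_ge0 i j : 0 <= DTW X X' i j.
Proof.
have [pi pi_align] := @alignment_exists R T T'.
apply: lb_le_inf; first by exists (Lpi X X' pi i j), pi.
by move=> _ [p [p_align ->]]; exact: Lpi_ge0.
Qed.

Variables (C : finType) (Y : 'I_n -> C) (w : 'I_n -> R) (w' : 'I_n' -> R).
Hypotheses (w_simplex : in_simplex w) (w'_simplex : in_simplex w').

Let g0 := \matrix_(i, j) (w i * w' j) : 'M[R]_(n, n').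
Let g0_coupling : coupling w w' g0 := product_coupling w_simplex w'_simplex.

Lemma cost_OT_DTW_le_CMAD : cost_OT_DTW X X' w w' <= cost_CMAD X X' Y w w'.
Proof.
have [pi pi_align] := @alignment_exists R T T'.
apply: inf_le_inf.
- exists 0 => _ [g [g_coupling ->]].
  by apply: weighted_sum_ge0 => *; [exact: coupling_ge0 g_coupling | exact: DTW_ge0].
- by eexists; exists g0, (fun=> pi).
move=> _ [g [pis [g_coupling [pis_align ->]]]].
exists (\sum_i \sum_j g i j * DTW X X' i j); first by exists g.
apply: ler_weighted_sum => *; first exact: coupling_ge0 g_coupling.
exact: DTW_le_Lpi.
Qed.

Lemma cost_CMAD_le_MAD : cost_CMAD X X' Y w w' <= cost_MAD X X' w w'.
Proof.
have [pi pi_align] := @alignment_exists R T T'.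
apply: inf_le_inf.
- exists 0 => _ [g [pis [g_coupling [pis_align ->]]]].
  by apply: weighted_sum_ge0 => *; [exact: coupling_ge0 g_coupling | exact: Lpi_ge0].
- by eexists; exists g0, pi.
move=> _ [g [p [g_coupling [p_align ->]]]].
by eexists; first by exists g, (fun=> p).
Qed.

End Costs.

Theorem mainTheorem1 (R : realType) (C : finType) (n n' T T' q : nat)
  (X : 'I_n -> 'I_T -> 'I_q -> R) (X' : 'I_n' -> 'I_T' -> 'I_q -> R)
  (w : 'I_n -> R) (w' : 'I_n' -> R) (Y : 'I_n -> C) :
  (0 < T)%N -> (0 < T')%N ->
  in_simplex w -> in_simplex w' ->
  cost_OT_DTW X X' w w' <= cost_CMAD X X' Y w w' /\
  cost_CMAD X X' Y w w' <= cost_MAD X X' w w'.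
Proof.
move=> _ _ w_simplex w'_simplex.
by split; [exact: cost_OT_DTW_le_CMAD | exact: cost_CMAD_le_MAD].
Qed.
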